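(* Let $k$ be a commutative ring containing $1/2$ and let $A$ be a smooth commutative $k$-algebra such that the $A$-module $\mathrm{Der}_k(A)$ is free with a basis $\tau_1,\dots,\tau_n$ of pairwise commuting derivations; let $\omega_1,\dots,\omega_n$ be the dual basis of $\Omega^1_{A/k}$, so that $df=\sum_r\tau_r(f)\,\omega_r$ for $f\in A$. Let $g=(g^{ij})\in GL_n(A)$ be such that the derivations $\tau'_i=\sum_j g^{ij}\tau_j$ ($i=1,\dots,n$) pairwise commute, let $\omega'_1,\dots,\omega'_n$ be the basis of $\Omega^1_{A/k}$ dual to $(\tau'_i)$ (so $\omega'_i=\sum_p (g^{-1})^{pi}\omega_p$), and let $A=(A^{\alpha\beta})\in GL_m(A)$ be arbitrary. With summation over repeated indices, put $$g^{i\alpha\gamma}=g^{iq}\,\tau_q\big((A^{-1})^{\alpha\mu}\big)A^{\mu\gamma},\qquad h_E^{ij}=\tau_j\big(g^{i\nu\nu}\big)+\tfrac12\,g^{iq}\,\tau_j\big((A^{-1})^{\mu\beta}\big)A^{\beta\gamma}\,\tau_q\big((A^{-1})^{\gamma\nu}\big)A^{\nu\mu},$$ and for $1\le i,j\le n$ define the $1$-form $$B_{ij}=-\tfrac12\big\{g^{i\mu\nu}\,d g^{j\nu\mu}-g^{j\nu\mu}\,d g^{i\mu\nu}\big\}-g^{ip}\tau_p(h_E^{jq})\,\omega_q+g^{jp}\tau_p(h_E^{iq})\,\omega_q-h_E^{jp}\,dg^{ip}+h_E^{ip}\,dg^{jp}.$$ Then $$B_{ij}=-\tfrac12\,\mathrm{tr}\big\{A^{-1}\tau'_i(A)A^{-1}\tau'_j(A)A^{-1}\tau'_r(A)-A^{-1}\tau'_j(A)A^{-1}\tau'_i(A)A^{-1}\tau'_r(A)\big\}\,\omega'_r,$$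 where $\tau'_i(A)$ denotes the matrix obtained by applying $\tau'_i$ entrywise.
   Context: $(A^{-1})^{\alpha\beta}$ denotes the $(\alpha,\beta)$ entry of the inverse matrix, $(g^{-1})^{pi}$ the $(p,i)$ entry of $g^{-1}$; repeated indices are summed (e.g. $g^{i\nu\nu}=\sum_\nu g^{i\nu\nu}$). The algebra $A$ and the matrix $A$ are distinguished by context (the matrix always carries indices or appears inside traces/derivations as a matrix). *)

From HB Require Import structures.
From mathcomp Require Import all_boot all_order all_algebra.
Set Implicit Arguments. Unset Strict Implicit. Unset Printing Implicit Defensive.
Import GRing.Theory.
Local Open Scope ring_scope.

(* Conventions: the base ring k is a commutative ring with computable units,
   A is a commutative k-algebra, 1/2 in A is (2^-1)%:A where 2 is a unit of k.
   1-forms live in an A-module M equipped with a k-derivation d : A -> M and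
   a basis omega_1..omega_n with  d f = sum_r tau_r(f) omega_r. *)

Section Defs.
Variables (k : comUnitRingType) (A : comAlgType k).

Definition is_kder (D : A -> A) : Prop :=
  [/\ forall x y, D (x + y) = D x + D y,
      forall (c : k) x, D (c *: x) = c *: D x
    & forall x y, D (x * y) = x * D y + D x * y].

Definition is_kder_mod (M : lmodType A) (D : A -> M) : Prop :=
  [/\ forall x y, D (x + y) = D x + D y,
      forall (c : k) x, D (c *: x) = c%:A *: D x
    & forall x y, D (x * y) = x *: D y + y *: D x].

Definition half : A := ((2%:R : k)^-1)%:A.

Variables (n m : nat) (tau : 'I_n -> A -> A) (g : 'M[A]_n) (Am Ai : 'M[A]_m).

Definition tau' (i : 'I_n) (x : A) : A := \sum_(j < n) g i j * tau j x.

Definition g3 (i : 'I_n) (a c : 'I_m) : A :=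
  \sum_(q < n) \sum_(mu < m) g i q * tau q (Ai a mu) * Am mu c.

Definition hE (i j : 'I_n) : A :=
  \sum_(nu < m) tau j (g3 i nu nu)
  + half * \sum_(q < n) \sum_(mu < m) \sum_(be < m) \sum_(ga < m) \sum_(nu < m)
      (g i q * tau j (Ai mu be) * Am be ga * tau q (Ai ga nu) * Am nu mu).

Definition tauA' (i : 'I_n) : 'M[A]_m := \matrix_(a, b) tau' i (Am a b).

Variables (M : lmodType A) (d : A -> M) (omega : 'I_n -> M) (ginv : 'M[A]_n).

Definition omega' (i : 'I_n) : M := \sum_(p < n) ginv p i *: omega p.

Definition Bform (i j : 'I_n) : M :=
  - (half *: \sum_(mu < m) \sum_(nu < m)
        (g3 i mu nu *: d (g3 j nu mu) - g3 j nu mu *: d (g3 i mu nu)))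
  - \sum_(p < n) \sum_(q < n) (g i p * tau p (hE j q)) *: omega q
  + \sum_(p < n) \sum_(q < n) (g j p * tau p (hE i q)) *: omega q
  - \sum_(p < n) hE j p *: d (g i p)
  + \sum_(p < n) hE i p *: d (g j p).

Definition Bform_rhs (i j : 'I_n) : M :=
  - (half *: \sum_(r < n)
      \tr (Ai *m tauA' i *m Ai *m tauA' j *m Ai *m tauA' r
           - Ai *m tauA' j *m Ai *m tauA' i *m Ai *m tauA' r) *: omega' r).

End Defs.

From Pilot Require Import Defs.
From HB Require Import structures.
From mathcomp Require Import all_boot all_order all_algebra.
From mathcomp Require Import ring.
Import GRing.Theory.
Local Open Scope ring_scope.
Set Implicit Arguments. Unset Strict Implicit.

(* Write G_i = tau'_i(A^-1) A and X_r = tau_r(A^-1) A, so that the g^{i alpha gamma}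
   are the entries of G_i and G_i = sum_q g^{iq} X_q.  For derivations D1, D2 the
   matrices X_D = D(A^-1) A satisfy the Maurer-Cartan identity
     D1(X_D2) - D2(X_D1) = X_[D1,D2] + [X_D1, X_D2];
   as the tau'_i commute, the G_i form a flat connection, and tau'_i(tr G_j) is
   symmetric in i, j.  In the coordinates of omega, B_ij is -1/2 times an
   antisymmetrised trace plus L_{tau'_j} beta_i - L_{tau'_i} beta_j, where
   beta_i = sum_q h_E^{iq} omega_q.  The part d(tr G_i) of beta_i is exact and
   contributes d(tau'_j tr G_i - tau'_i tr G_j) = 0.  For the part 1/2 tr(X_q G_i),
   Maurer-Cartan for the pair (tau'_i, tau_r), whose commutator is
   -sum_p tau_r(g^{ip}) tau_p, together with cyclicity of the trace leaves
   1/2 tr(X_r [G_i, G_j]); since X_r = sum_s (g^-1)^{rs} G_s and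
   A^-1 tau'_i(A) = -G_i, this is the r-th coordinate of the right-hand side. *)

Lemma mxtraceN (V : zmodType) p (P : 'M[V]_p) : \tr (- P) = - \tr P.
Proof. exact: raddfN. Qed.

Lemma mxtrace_sum (V : nmodType) p (I : Type) (r : seq I) (P : pred I)
    (F : I -> 'M[V]_p) :
  \tr (\sum_(i <- r | P i) F i) = \sum_(i <- r | P i) \tr (F i).
Proof. exact: raddf_sum. Qed.

Section LinearCombination.
Variables (R : pzRingType) (V : lmodType R) (n : nat) (v : 'I_n -> V).

Lemma scaler_comb a (c : 'I_n -> R) :
  a *: \sum_r c r *: v r = \sum_r (a * c r) *: v r.
Proof. by rewrite scaler_sumr; apply: eq_bigr => r _; rewrite scalerA. Qed.

Lemma comb_opp (c : 'I_n -> R) : - \sum_r c r *: v r = \sum_r (- c r) *: v r.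
Proof. by rewrite -sumrN; apply: eq_bigr => r _; rewrite scaleNr. Qed.

Lemma comb_add (c1 c2 : 'I_n -> R) :
  \sum_r c1 r *: v r + \sum_r c2 r *: v r = \sum_r (c1 r + c2 r) *: v r.
Proof. by rewrite -big_split; apply: eq_bigr => r _; rewrite scalerDl. Qed.

Lemma comb_sub (c1 c2 : 'I_n -> R) :
  \sum_r c1 r *: v r - \sum_r c2 r *: v r = \sum_r (c1 r - c2 r) *: v r.
Proof. by rewrite comb_opp comb_add. Qed.

Lemma comb_sum (I : finType) (c : I -> 'I_n -> R) :
  \sum_x \sum_r c x r *: v r = \sum_r (\sum_x c x r) *: v r.
Proof. by rewrite exchange_big; apply: eq_bigr => r _; rewrite scaler_suml. Qed.

End LinearCombination.

Section KDerivation.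
Variables (k : comUnitRingType) (A : comAlgType k) (D : A -> A).
Hypothesis D_der : is_kder D.

Lemma derD x y : D (x + y) = D x + D y. Proof. by case: D_der. Qed.
Lemma derZ (c : k) x : D (c *: x) = c *: D x. Proof. by case: D_der. Qed.
Lemma derM x y : D (x * y) = x * D y + D x * y. Proof. by case: D_der. Qed.

Lemma der0 : D 0 = 0. Proof. by have := derZ 0 0; rewrite !scale0r. Qed.
Lemma derN x : D (- x) = - D x. Proof. by rewrite -scaleN1r derZ scaleN1r. Qed.
Lemma derB x y : D (x - y) = D x - D y. Proof. by rewrite derD derN. Qed.

Lemma der1 : D 1 = 0.
Proof. by have := derM 1 1; rewrite !mul1r mulr1 -{1}[D 1]addr0 => /addrI <-. Qed.

Lemma der_sum (I : Type) (r : seq I) (P : pred I) (F : I -> A) :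
  D (\sum_(i <- r | P i) F i) = \sum_(i <- r | P i) D (F i).
Proof. exact: (big_morph D derD der0). Qed.

Lemma der_scalarl (c : k) x : D (c%:A * x) = c%:A * D x.
Proof. by rewrite -!scalerAl !mul1r derZ. Qed.

Lemma mxderM p q s (X : 'M[A]_(p, q)) (Y : 'M[A]_(q, s)) :
  map_mx D (X *m Y) = X *m map_mx D Y + map_mx D X *m Y.
Proof.
apply/matrixP => a b; rewrite !mxE der_sum -big_split /=.
by apply: eq_bigr => c _; rewrite derM !mxE.
Qed.

Lemma mxder1 p : map_mx D (1%:M : 'M[A]_p) = 0.
Proof. by apply/matrixP => a b; rewrite !mxE; case: (a == b); rewrite ?der0 ?der1. Qed.

Lemma mxtrace_der p (X : 'M[A]_p) : \tr (map_mx D X) = D (\tr X).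
Proof. by rewrite /mxtrace der_sum; apply: eq_bigr => a _; rewrite mxE. Qed.

End KDerivation.

Section DerivationCombination.
Variables (k : comUnitRingType) (A : comAlgType k) (n : nat) (tau : 'I_n -> A -> A).
Hypothesis tau_der : forall i, is_kder (tau i).

Lemma kder_comb (a : 'I_n -> A) : is_kder (fun x => \sum_j a j * tau j x).
Proof.
split=> [x y|c x|x y].
- by rewrite -big_split; apply: eq_bigr => j _; rewrite derD // mulrDr.
- by rewrite scaler_sumr; apply: eq_bigr => j _; rewrite derZ // scalerAr.
- rewrite mulr_sumr mulr_suml -big_split; apply: eq_bigr => j _.
  by rewrite /= derM //; ring.
Qed.

Lemma der_comb_commutator (D : A -> A) (a : 'I_n -> A) x :
    is_kder D -> (forall j y, D (tau j y) = tau j (D y)) ->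
  D (\sum_j a j * tau j x) - \sum_j a j * tau j (D x) = \sum_j D (a j) * tau j x.
Proof.
move=> D_der D_tau; rewrite der_sum // -sumrB; apply: eq_bigr => j _.
by rewrite derM // D_tau addrAC subrr add0r.
Qed.

End DerivationCombination.

Section LogarithmicDerivative.
Variables (k : comUnitRingType) (A : comAlgType k) (m : nat) (Am Ai : 'M[A]_m).
Hypothesis A_inv_r : Am *m Ai = 1%:M.
Hypothesis A_inv_l : Ai *m Am = 1%:M.

(* [dlog D] is D(A^-1) A = - A^-1 D(A); for D = tau'_i its entries are the
   g^{i alpha gamma} of the statement. *)
Definition dlog (D : A -> A) : 'M[A]_m := map_mx D Ai *m Am.

Lemma dlog_comb n (B : 'I_n -> A -> A) (a : 'I_n -> A) :
  dlog (fun x => \sum_j a j * B j x) = \sum_j a j *: dlog (B j).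
Proof.
apply/matrixP => u v; rewrite /dlog summxE !mxE.
under eq_bigr => w _ do rewrite !mxE mulr_suml.
rewrite exchange_big /=; apply: eq_bigr => j _.
by rewrite !mxE mulr_sumr; apply: eq_bigr => w _; rewrite !mxE mulrA.
Qed.

Lemma dlogE D : is_kder D -> dlog D = - (Ai *m map_mx D Am).
Proof.
move=> D_der; have := mxderM D_der Ai Am; rewrite A_inv_l mxder1 // => h.
by apply/eqP; rewrite -addr_eq0 addrC -h.
Qed.

Lemma dlog_mul D1 D2 : is_kder D2 ->
  dlog D1 *m dlog D2 = - (map_mx D1 Ai *m map_mx D2 Am).
Proof.
move=> D2_der; rewrite [dlog D2]dlogE // /dlog mulmxN !mulmxA.
by rewrite -[_ *m Am *m Ai]mulmxA A_inv_r mulmx1.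
Qed.

Lemma dlog_maurer_cartan D1 D2 : is_kder D1 -> is_kder D2 ->
  map_mx D1 (dlog D2) - map_mx D2 (dlog D1)
  = dlog (fun x => D1 (D2 x) - D2 (D1 x))
    + (dlog D1 *m dlog D2 - dlog D2 *m dlog D1).
Proof.
move=> D1_der D2_der; rewrite /dlog !mxderM // -/(dlog D1) -/(dlog D2).
rewrite !dlog_mul // !opprK.
have -> : map_mx (fun x => D1 (D2 x) - D2 (D1 x)) Ai
        = map_mx D1 (map_mx D2 Ai) - map_mx D2 (map_mx D1 Ai).
  by apply/matrixP => u v; rewrite !mxE.
by rewrite mulmxBl opprD addrACA addrC [- _ + _]addrC.
Qed.

End LogarithmicDerivative.

Section CommutingFrame.
Variables (k : comUnitRingType) (A : comAlgType k) (n : nat) (tau : 'I_n -> A -> A).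
Variable g : 'M[A]_n.
Hypothesis tau_der : forall i, is_kder (tau i).
Hypothesis tau_comm : forall i j x, tau i (tau j x) = tau j (tau i x).

Local Notation T' := (tau' tau g).
Local Notation half := (Defs.half A).

Lemma tau'_der i : is_kder (T' i). Proof. exact: kder_comb. Qed.

Lemma tau_tau'_commutator r i x :
  tau r (T' i x) - T' i (tau r x) = \sum_p tau r (g i p) * tau p x.
Proof. exact: der_comb_commutator. Qed.

(* [lie_alt h i j r] is the [r]-th coordinate of the 1-form
   L_{tau'_j} beta_i - L_{tau'_i} beta_j, where beta_u = sum_q h u q omega_q;
   since the tau_p commute, L_{tau'_j} omega_q = d g^{jq}. *)
Definition lie_alt (h : 'I_n -> 'I_n -> A) (i j r : 'I_n) : A :=
  T' j (h i r) + \sum_p h i p * tau r (g j p)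
  - (T' i (h j r) + \sum_p h j p * tau r (g i p)).

Lemma lie_alt_affine (c : k) (h h1 h2 : 'I_n -> 'I_n -> A) i j r :
    (forall u q, h u q = h1 u q + c%:A * h2 u q) ->
  lie_alt h i j r = lie_alt h1 i j r + c%:A * lie_alt h2 i j r.
Proof.
move=> h_split; have S l u : \sum_p h u p * tau r (g l p)
    = \sum_p h1 u p * tau r (g l p) + c%:A * \sum_p h2 u p * tau r (g l p).
  by rewrite mulr_sumr -big_split; apply: eq_bigr => p _; rewrite h_split mulrDl mulrA.
rewrite /lie_alt !S !h_split !(derD (tau'_der _)) !(der_scalarl (tau'_der _)).
ring.
Qed.

Lemma lie_alt_exact (t : 'I_n -> A) i j r :
  lie_alt (fun u q => tau q (t u)) i j r = tau r (T' j (t i) - T' i (t j)).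
Proof.
have E l u : T' l (tau r (t u)) + \sum_p tau p (t u) * tau r (g l p)
    = tau r (T' l (t u)).
  rewrite -[RHS](subrK (T' l (tau r (t u)))) tau_tau'_commutator addrC.
  by congr (_ + _); apply: eq_bigr => p _; rewrite mulrC.
by rewrite /lie_alt !E derB.
Qed.

Variables (m : nat) (Am Ai : 'M[A]_m).
Hypothesis tau'_comm : forall i j x, T' i (T' j x) = T' j (T' i x).
Hypothesis A_inv_r : Am *m Ai = 1%:M.
Hypothesis A_inv_l : Ai *m Am = 1%:M.

Local Notation X r := (dlog Am Ai (tau r)).
Local Notation G i := (dlog Am Ai (T' i)).

Lemma dlog_tau' i : G i = \sum_q g i q *: X q. Proof. exact: dlog_comb. Qed.

Lemma dlog_tau'_flat i j :
  map_mx (T' i) (G j) - map_mx (T' j) (G i) = G i *m G j - G j *m G i.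
Proof.
rewrite (dlog_maurer_cartan A_inv_r A_inv_l (tau'_der i) (tau'_der j)).
have -> : dlog Am Ai (fun x => T' i (T' j x) - T' j (T' i x)) = 0.
  rewrite /dlog (eq_map_mx (fun=> 0)) => [|x]; last by rewrite tau'_comm subrr.
  by rewrite [map_mx _ _](_ : _ = 0) ?mul0mx //; apply/matrixP => u v; rewrite !mxE.
by rewrite add0r.
Qed.

Lemma dlog_tau_tau' r i :
  map_mx (T' i) (X r) - map_mx (tau r) (G i)
  = - \sum_p tau r (g i p) *: X p + (G i *m X r - X r *m G i).
Proof.
rewrite (dlog_maurer_cartan A_inv_r A_inv_l (tau'_der i) (tau_der r)).
congr (_ + _).
rewrite /dlog (eq_map_mx (fun x => \sum_p (- tau r (g i p)) * tau p x)) => [|x].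
  by rewrite -/(dlog _ _ _) dlog_comb -sumrN; apply: eq_bigr => p _; rewrite scaleNr.
by rewrite -opprB tau_tau'_commutator -sumrN; apply: eq_bigr => p _; rewrite mulNr.
Qed.

Lemma trace_tau'_sym i j : T' i (\tr (G j)) = T' j (\tr (G i)).
Proof.
apply/eqP; rewrite -subr_eq0 -(mxtrace_der (tau'_der i)) -(mxtrace_der (tau'_der j)).
by rewrite -raddfB /= dlog_tau'_flat raddfB /= mxtrace_mulC subrr.
Qed.

Lemma lie_coord_trace_dlog i j r :
  T' i (\tr (X r *m G j)) + \sum_p \tr (X p *m G j) * tau r (g i p)
  = \tr (X r *m map_mx (T' i) (G j)) + \tr (map_mx (tau r) (G i) *m G j)
    + \tr (X r *m (G j *m G i)) - \tr (X r *m (G i *m G j)).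
Proof.
have /eqP := dlog_tau_tau' r i; rewrite subr_eq => /eqP F.
rewrite -(mxtrace_der (tau'_der i)) (mxderM (tau'_der i)) F.
rewrite !mulmxDl !mulNmx !mxtraceD !mxtraceN mulmx_suml mxtrace_sum.
have -> : \sum_p \tr ((tau r (g i p) *: X p) *m G j)
        = \sum_p \tr (X p *m G j) * tau r (g i p).
  by apply: eq_bigr => p _; rewrite -scalemxAl mxtraceZ mulrC.
rewrite (mxtrace_mulC (G i *m X r)) [G j *m (G i *m X r)]mulmxA.
rewrite (mxtrace_mulC (G j *m G i)) -[X r *m G i *m G j]mulmxA.
ring.
Qed.

Lemma lie_alt_trace i j r :
  lie_alt (fun u q => \tr (X q *m G u)) i j r
  = \tr (G i *m map_mx (tau r) (G j)) - \tr (G j *m map_mx (tau r) (G i))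
    + \tr (X r *m (G i *m G j - G j *m G i)).
Proof.
rewrite /lie_alt !lie_coord_trace_dlog.
have /eqP := dlog_tau'_flat i j; rewrite subr_eq addrC -subr_eq => /eqP <-.
rewrite !mulmxBr !raddfB /= (mxtrace_mulC (map_mx _ (G i))).
rewrite (mxtrace_mulC (map_mx _ (G j))).
ring.
Qed.

Variable ginv : 'M[A]_n.
Hypothesis g_inv_l : ginv *m g = 1%:M.

Lemma sum_ginv_dlog_tau' r : \sum_s ginv r s *: G s = X r.
Proof.
have E q : \sum_s ginv r s *: (g s q *: X q) = (r == q)%:R *: X q.
  have := congr1 (fun P : 'M[A]_n => P r q) g_inv_l; rewrite !mxE => <-.
  by rewrite scaler_suml; apply: eq_bigr => s _; rewrite scalerA.
under eq_bigr => s _ do rewrite dlog_tau' scaler_sumr.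
rewrite exchange_big /=; under eq_bigr => q _ do rewrite E.
rewrite (bigD1 r) //= eqxx scale1r big1 ?addr0 // => q /negPf.
by rewrite eq_sym => ->; rewrite scale0r.
Qed.

Lemma tauA'_dlog i : Ai *m tauA' tau g Am i = - G i.
Proof.
rewrite (dlogE A_inv_l (tau'_der i)) opprK; congr (_ *m _).
by apply/matrixP => a b; rewrite !mxE.
Qed.

Lemma Bform_rhs_trace i j r :
  \sum_s ginv r s
      * \tr (Ai *m tauA' tau g Am i *m Ai *m tauA' tau g Am j *m Ai *m tauA' tau g Am s
             - Ai *m tauA' tau g Am j *m Ai *m tauA' tau g Am i *m Ai *m tauA' tau g Am s)
  = - \tr (X r *m (G i *m G j - G j *m G i)).
Proof.
have E (P1 P2 P3 : 'M[A]_m) :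
    Ai *m P1 *m Ai *m P2 *m Ai *m P3 = (Ai *m P1) *m (Ai *m P2) *m (Ai *m P3).
  by rewrite !mulmxA.
have F s : \tr (Ai *m tauA' tau g Am i *m Ai *m tauA' tau g Am j *m Ai *m tauA' tau g Am s
             - Ai *m tauA' tau g Am j *m Ai *m tauA' tau g Am i *m Ai *m tauA' tau g Am s)
    = \tr ((G j *m G i - G i *m G j) *m G s).
  by rewrite !E !tauA'_dlog !mulNmx !mulmxN !opprK -mulmxBl opprK addrC.
under eq_bigr => s _ do rewrite F -mxtraceZ scalemxAr.
rewrite -mxtrace_sum -mulmx_sumr sum_ginv_dlog_tau' mxtrace_mulC.
by rewrite -opprB mulmxN mxtraceN.
Qed.

Lemma g3_dlog i a c : g3 tau g Am Ai i a c = G i a c.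
Proof.
rewrite /g3 mxE exchange_big; apply: eq_bigr => mu _.
by rewrite mxE mulr_suml.
Qed.

Lemma sum_g3_trace i j r :
  \sum_mu \sum_nu (g3 tau g Am Ai i mu nu * tau r (g3 tau g Am Ai j nu mu)
                   - g3 tau g Am Ai j nu mu * tau r (g3 tau g Am Ai i mu nu))
  = \tr (G i *m map_mx (tau r) (G j)) - \tr (G j *m map_mx (tau r) (G i)).
Proof.
have E (P Q : 'M[A]_m) :
    \tr (P *m map_mx (tau r) Q) = \sum_mu \sum_nu P mu nu * tau r (Q nu mu).
  by apply: eq_bigr => mu _; rewrite mxE; apply: eq_bigr => nu _; rewrite mxE.
rewrite !E [Y in _ - Y]exchange_big -sumrB; apply: eq_bigr => mu _.
by rewrite -sumrB; apply: eq_bigr => nu _; rewrite !g3_dlog.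
Qed.

Lemma hE_dlog i q :
  hE tau g Am Ai i q = tau q (\tr (G i)) + half * \tr (X q *m G i).
Proof.
congr (_ + _ * _).
  by rewrite /mxtrace der_sum //; apply: eq_bigr => nu _; rewrite g3_dlog.
rewrite dlog_tau' mulmx_sumr mxtrace_sum; apply: eq_bigr => q' _.
rewrite -scalemxAr mxtraceZ mulr_sumr; apply: eq_bigr => mu _.
rewrite mxE mulr_sumr exchange_big; apply: eq_bigr => ga _.
rewrite /dlog !mxE mulr_suml mulr_sumr; apply: eq_bigr => be _.
rewrite !mxE !mulr_sumr; apply: eq_bigr => nu _.
by rewrite !mxE; ring.
Qed.

Variables (M : lmodType A) (d : A -> M) (omega : 'I_n -> M).
Hypothesis d_omega : forall f, d f = \sum_r tau r f *: omega r.

Lemma Bform_coord i j :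
  Bform tau g Am Ai d omega i j
  = \sum_r (lie_alt (hE tau g Am Ai) i j r
            - half * \sum_mu \sum_nu
                (g3 tau g Am Ai i mu nu * tau r (g3 tau g Am Ai j nu mu)
                 - g3 tau g Am Ai j nu mu * tau r (g3 tau g Am Ai i mu nu)))
           *: omega r.
Proof.
rewrite /Bform.
under eq_bigr => mu _ do under eq_bigr => nu _ do
  rewrite !d_omega !scaler_comb comb_sub.
under eq_bigr => mu _ do rewrite comb_sum.
under [Y in _ + Y]eq_bigr => p _ do rewrite d_omega scaler_comb.
under [Y in _ - Y + _]eq_bigr => p _ do rewrite d_omega scaler_comb.
rewrite !comb_sum scaler_comb comb_opp comb_sub comb_add comb_sub comb_add.
by apply: eq_bigr => r _; rewrite /lie_alt /tau'; congr (_ *: _); ring.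
Qed.

Lemma Bform_rhs_coord i j :
  Bform_rhs tau g Am Ai omega ginv i j
  = \sum_r (half * \tr (X r *m (G i *m G j - G j *m G i))) *: omega r.
Proof.
rewrite /Bform_rhs /omega'; under eq_bigr => s _ do rewrite scaler_comb.
rewrite comb_sum scaler_comb comb_opp; apply: eq_bigr => r _; congr (_ *: _).
rewrite -[in RHS](opprK (\tr _)) -Bform_rhs_trace mulrN.
by congr (- (_ * _)); apply: eq_bigr => s _; rewrite mulrC.
Qed.

End CommutingFrame.

Theorem mainTheorem1
  (k : comUnitRingType) (A : comAlgType k)
  (two_unit : (2%:R : k) \is a GRing.unit)
  (n m : nat) (tau : 'I_n -> A -> A)
  (tau_der : forall i, is_kder (tau i))
  (tau_comm : forall i j x, tau i (tau j x) = tau j (tau i x))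
  (tau_span : forall D : A -> A, is_kder D ->
      exists a : 'I_n -> A, forall x, D x = \sum_(i < n) a i * tau i x)
  (tau_free : forall a b : 'I_n -> A,
      (forall x, \sum_(i < n) a i * tau i x = \sum_(i < n) b i * tau i x) ->
      a = b)
  (M : lmodType A) (d : A -> M) (omega : 'I_n -> M)
  (d_der : is_kder_mod d)
  (omega_span : forall v : M, exists a : 'I_n -> A, v = \sum_(r < n) a r *: omega r)
  (omega_free : forall a b : 'I_n -> A,
      \sum_(r < n) a r *: omega r = \sum_(r < n) b r *: omega r -> a = b)
  (d_omega : forall f : A, d f = \sum_(r < n) tau r f *: omega r)
  (g ginv : 'M[A]_n) (g_inv_r : g *m ginv = 1%:M) (g_inv_l : ginv *m g = 1%:M)
  (tau'_comm : forall i j x,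
      tau' tau g i (tau' tau g j x) = tau' tau g j (tau' tau g i x))
  (Am Ai : 'M[A]_m) (A_inv_r : Am *m Ai = 1%:M) (A_inv_l : Ai *m Am = 1%:M)
  (i j : 'I_n) :
  Bform tau g Am Ai d omega i j = Bform_rhs tau g Am Ai omega ginv i j.
Proof.
rewrite (Bform_coord g Am Ai d_omega) (Bform_rhs_coord tau_der A_inv_l g_inv_l).
apply: eq_bigr => r _; congr (_ *: _).
rewrite sum_g3_trace (lie_alt_affine g tau_der _ _ _ (hE_dlog g tau_der Am Ai)).
rewrite (lie_alt_exact g tau_der tau_comm).
rewrite (trace_tau'_sym tau_der tau'_comm A_inv_r A_inv_l) subrr (der0 (tau_der r)).
rewrite (lie_alt_trace tau_der tau_comm tau'_comm A_inv_r A_inv_l).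
ring.
Qed.
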